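(* Let $\mathcal H$ be a finite-dimensional complex Hilbert space and $\mathcal G$ a finite set of Hermitian operators on $\mathcal H$. Let $\Pi_{\mathcal Z}$ denote the orthogonal projection (with respect to the Hilbert–Schmidt inner product $\mathrm{tr}(O_1^\dagger O_2)$ on $\mathrm{End}(\mathcal H)$) onto the center $\mathcal Z_{\mathcal G}$. Then $$\Pi_{\mathcal Z}(\mathfrak L(\mathcal G))=\mathrm{span}\big(\Pi_{\mathcal Z}(\mathcal G)\big).$$
   Context: $\mathfrak L(\mathcal G)$ is the dynamical Lie algebra: the complex linear span of $\mathcal G$ and all nested commutators $[h_{\alpha_1},[h_{\alpha_2},\dots,[h_{\alpha_{n-1}},h_{\alpha_n}]\dots]]$ with $h_{\alpha_i}\in\mathcal G$. The bond algebra $\mathcal A_{\mathcal G}$ is the von Neumann algebra generated by $\mathcal G$ (with identity, closed under complex linear combinations, products and adjoints), the commutant is $\mathcal C_{\mathcal G}=\{Q:[Q,h]=0\ \forall h\in\mathcal G\}$, and the center is $\mathcal Z_{\mathcal G}=\mathcal A_{\mathcal G}\cap\mathcal C_{\mathcal G}$. *)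

(* Operators on an n-dimensional complex Hilbert space are
   n x n matrices over a numClosedFieldType C (C has a complex conjugation). *)
From mathcomp Require Import all_boot all_order all_algebra.
Set Implicit Arguments. Unset Strict Implicit. Unset Printing Implicit Defensive.
Import Order.TTheory GRing.Theory Num.Theory.
Local Open Scope ring_scope.

Section Defs.
Variables (C : numClosedFieldType) (n : nat).
Notation M := 'M[C]_n.

Definition adjmx (A : M) : M := (map_mx Num.conj A)^T.
Definition is_hermitian (A : M) : Prop := adjmx A = A.

Definition commr (A B : M) : M := A *m B - B *m A.

Definition hs (A B : M) : C := \tr (adjmx A *m B).

Definition lin_span (S : M -> Prop) (X : M) : Prop :=
  exists (k : nat) (c : 'I_k -> C) (Y : 'I_k -> M),
    (forall i, S (Y i)) /\ X = \sum_(i < k) c i *: Y i.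

Inductive nested_comm (G : seq M) : M -> Prop :=
| nc_base h : h \in G -> nested_comm G h
| nc_step h X : h \in G -> nested_comm G X -> nested_comm G (commr h X).

Definition dla (G : seq M) : M -> Prop := lin_span (nested_comm G).

(* bond algebra: the unital *-algebra generated by G (finite dimension, so
   the von Neumann algebra generated by G). *)
Inductive bond_alg (G : seq M) : M -> Prop :=
| ba_gen h : h \in G -> bond_alg G h
| ba_one : bond_alg G 1%:M
| ba_add A B : bond_alg G A -> bond_alg G B -> bond_alg G (A + B)
| ba_scale (c : C) A : bond_alg G A -> bond_alg G (c *: A)
| ba_mul A B : bond_alg G A -> bond_alg G B -> bond_alg G (A *m B)
| ba_adj A : bond_alg G A -> bond_alg G (adjmx A).

Definition commutant (G : seq M) (Q : M) : Prop :=
  forall h, h \in G -> commr Q h = 0.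

Definition center_set (G : seq M) (Q : M) : Prop := bond_alg G Q /\ commutant G Q.

Definition orth_proj (Z : M -> Prop) (P : M -> M) : Prop :=
  forall X, Z (P X) /\ (forall Y, Z Y -> hs (X - P X) Y = 0).

End Defs.

(* The Hilbert-Schmidt projection P onto the center Z is linear, and it kills
   every commutator [h, X] with h in G: for D central,
   tr([h, X]^† D) = tr(X^† [h^†, D]) = tr(X^† [h, D]) = 0, because h is Hermitian
   and D commutes with h.  The dynamical Lie algebra is spanned by G and such
   commutators, so its image under P is spanned by the images of G. *)
From mathcomp Require Import all_boot all_order all_algebra.
Import GRing.Theory Num.Theory.
Local Open Scope ring_scope.
Set Implicit Arguments. Unset Strict Implicit.

Section LinSpan.
Variables (C : numClosedFieldType) (n : nat).
Notation M := 'M[C]_n.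
Implicit Types (S T : M -> Prop) (x y : M).

Lemma lin_span0 S : lin_span S 0.
Proof. by exists 0%N, (fun _ => 0), (fun _ => 0); split; [case | rewrite big_ord0]. Qed.

Lemma lin_span_gen S x : S x -> lin_span S x.
Proof. by move=> Sx; exists 1%N, (fun _ => 1), (fun _ => x); rewrite big_ord1 scale1r. Qed.

Lemma lin_spanD S x y : lin_span S x -> lin_span S y -> lin_span S (x + y).
Proof.
move=> [k1 [c1 [Y1 [S1 ->]]]] [k2 [c2 [Y2 [S2 ->]]]].
exists (k1 + k2)%N, (fun i => match split i with inl j => c1 j | inr j => c2 j end),
  (fun i => match split i with inl j => Y1 j | inr j => Y2 j end); split.
  by move=> i; case: (split i).
by rewrite big_split_ord; congr (_ + _); apply: eq_bigr => i _;
  [rewrite (unsplitK (inl i)) | rewrite (unsplitK (inr i))].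
Qed.

Lemma lin_spanZ S a x : lin_span S x -> lin_span S (a *: x).
Proof.
move=> [k [c [Y [SY ->]]]]; exists k, (fun i => a * c i), Y; split => //.
by rewrite scaler_sumr; apply: eq_bigr => i _; rewrite scalerA.
Qed.

Lemma lin_span_ind S (Q : M -> Prop) :
  Q 0 -> (forall x y, Q x -> Q y -> Q (x + y)) ->
  (forall a x, Q x -> Q (a *: x)) -> (forall x, S x -> Q x) ->
  forall x, lin_span S x -> Q x.
Proof.
move=> Q0 QD QZ QS _ [k [c [Y [SY ->]]]].
by apply: big_ind => // i _; apply/QZ/QS.
Qed.

Lemma lin_span_sub S T :
  (forall x, S x -> lin_span T x) -> forall x, lin_span S x -> lin_span T x.
Proof.
move=> ST; apply: lin_span_ind => //; [exact: lin_span0 | exact: lin_spanD | exact: lin_spanZ].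
Qed.

Lemma lin_span_linear_image (f : M -> M) S x :
  {morph f : u v / u + v} -> (forall a, {morph f : u / a *: u}) ->
  (exists y, lin_span S y /\ x = f y) <->
  lin_span (fun z => exists2 y, S y & z = f y) x.
Proof.
move=> fD fZ; have f0 : f 0 = 0 by have := fZ 0 0; rewrite !scale0r.
split.
  move=> [y [Sy ->]]; move: y Sy; apply: lin_span_ind.
  - by rewrite f0; apply: lin_span0.
  - by move=> u v Su Sv; rewrite fD; apply: lin_spanD.
  - by move=> a u Su; rewrite fZ; apply: lin_spanZ.
  by move=> u Su; apply: lin_span_gen; exists u.
move: x; apply: lin_span_ind.
- by exists 0; split; [apply: lin_span0 | rewrite f0].
- move=> _ _ [u [Su ->]] [v [Sv ->]].
  by exists (u + v); split; [apply: lin_spanD | rewrite fD].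
- by move=> a _ [u [Su ->]]; exists (a *: u); split; [apply: lin_spanZ | rewrite fZ].
by move=> _ [u Su ->]; exists u; split; [apply: lin_span_gen |].
Qed.

End LinSpan.

Section HilbertSchmidt.
Variables (C : numClosedFieldType) (n : nat).
Notation M := 'M[C]_n.
Implicit Types A B D X : M.

Lemma adjmxD A B : adjmx (A + B) = adjmx A + adjmx B.
Proof. by rewrite /adjmx map_mxD linearD. Qed.

Lemma adjmxB A B : adjmx (A - B) = adjmx A - adjmx B.
Proof. by rewrite /adjmx map_mxB linearB. Qed.

Lemma adjmxZ (a : C) A : adjmx (a *: A) = a^* *: adjmx A.
Proof. by rewrite /adjmx map_mxZ linearZ. Qed.

Lemma adjmxM A B : adjmx (A *m B) = adjmx B *m adjmx A.
Proof. by rewrite /adjmx map_mxM trmx_mul. Qed.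

Lemma hsDl A B D : hs (A + B) D = hs A D + hs B D.
Proof. by rewrite /hs adjmxD mulmxDl mxtraceD. Qed.

Lemma hsBl A B D : hs (A - B) D = hs A D - hs B D.
Proof. by rewrite /hs adjmxB mulmxBl raddfB. Qed.

Lemma hsZl (a : C) A D : hs (a *: A) D = a^* * hs A D.
Proof. by rewrite /hs adjmxZ -scalemxAl mxtraceZ. Qed.

Lemma hs_self A : hs A A = \sum_i \sum_j `|A j i| ^+ 2.
Proof.
rewrite /hs /mxtrace; apply: eq_bigr => i _; rewrite mxE.
by apply: eq_bigr => j _; rewrite !mxE normCKC.
Qed.

Lemma hs_self_eq0 A : hs A A = 0 -> A = 0.
Proof.
rewrite hs_self => A0; apply/matrixP => j i; rewrite mxE.
have col0 : \sum_j `|A j i| ^+ 2 = 0.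
  by apply: (psumr_eq0P _ A0) => // k _; apply: sumr_ge0 => l _; apply: exprn_ge0.
have : `|A j i| ^+ 2 = 0 by apply: (psumr_eq0P _ col0) => // k _; apply: exprn_ge0.
by move/eqP; rewrite sqrf_eq0 normr_eq0 => /eqP.
Qed.

Lemma hs_commrl h X D : hs (commr h X) D = hs X (commr (adjmx h) D).
Proof.
have cyclic : \tr (adjmx h *m adjmx X *m D) = \tr (adjmx X *m (D *m adjmx h)).
  by rewrite -mulmxA mxtrace_mulC mulmxA.
rewrite /hs /commr adjmxB !adjmxM mulmxBl mulmxBr !linearB.
by rewrite mulmxA; congr (_ - _); exact: cyclic.
Qed.

End HilbertSchmidt.

Section OrthProj.
Variables (C : numClosedFieldType) (n : nat).
Notation M := 'M[C]_n.
Variables (Z : M -> Prop) (P : M -> M).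
Hypotheses (ZD : forall A B, Z A -> Z B -> Z (A + B))
           (ZZ : forall (a : C) A, Z A -> Z (a *: A))
           (PZ : orth_proj Z P).

Lemma orth_projP X A : Z A -> (forall Y, Z Y -> hs (X - A) Y = 0) -> P X = A.
Proof.
move=> ZA XA_perp; have [ZPX XPX_perp] := PZ X.
have ZB : Z (A - P X) by apply: ZD => //; rewrite -scaleN1r; apply: ZZ.
have B_eq : A - P X = (X - P X) - (X - A) by rewrite opprB [RHS]addrC -addrA addKr.
have : hs (A - P X) (A - P X) = 0.
  by rewrite {1}B_eq hsBl XPX_perp // XA_perp // subrr.
by move/hs_self_eq0/eqP; rewrite subr_eq0 => /eqP.
Qed.

Lemma orth_projD : {morph P : X Y / X + Y}.
Proof.
move=> X Y; apply: orth_projP; first by apply: ZD; [case: (PZ X) | case: (PZ Y)].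
move=> W ZW; rewrite opprD addrACA hsDl.
by rewrite (proj2 (PZ X)) // (proj2 (PZ Y)) // addr0.
Qed.

Lemma orth_projZ (a : C) : {morph P : X / a *: X}.
Proof.
move=> X; apply: orth_projP; first by apply: ZZ; case: (PZ X).
by move=> W ZW; rewrite -scalerBr hsZl (proj2 (PZ X)) // mulr0.
Qed.

Lemma orth_proj_eq0 X : (forall Y, Z Y -> hs X Y = 0) -> P X = 0.
Proof.
move=> X_perp; apply: orth_projP; last by move=> Y ZY; rewrite subr0 X_perp.
by rewrite -(scale0r (P X)); apply: ZZ; case: (PZ X).
Qed.

End OrthProj.

Section Center.
Variables (C : numClosedFieldType) (n : nat) (G : seq 'M[C]_n).

Lemma center_setD A B : center_set G A -> center_set G B -> center_set G (A + B).
Proof.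
move=> [bA cA] [bB cB]; split; first exact: ba_add.
move=> h hG; rewrite /commr mulmxDl mulmxDr opprD addrACA.
by move: (cA h hG) (cB h hG); rewrite /commr => -> ->; rewrite addr0.
Qed.

Lemma center_setZ (a : C) A : center_set G A -> center_set G (a *: A).
Proof.
move=> [bA cA]; split; first exact: ba_scale.
by move=> h hG; move: (cA h hG); rewrite /commr -scalemxAl -scalemxAr -scalerBr => ->; rewrite scaler0.
Qed.

Lemma hs_commr_center h X D :
  is_hermitian h -> h \in G -> center_set G D -> hs (commr h X) D = 0.
Proof.
move=> hh hG [_ cD]; rewrite hs_commrl hh.
have -> : commr h D = - commr D h by rewrite /commr opprB.
by rewrite cD // oppr0 /hs mulmx0 mxtrace0.
Qed.

Lemma center_proj_commr (P : 'M[C]_n -> 'M[C]_n) h X :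
  orth_proj (center_set G) P -> is_hermitian h -> h \in G -> P (commr h X) = 0.
Proof.
move=> PZ hh hG; apply: (orth_proj_eq0 center_setD center_setZ PZ) => D.
exact: hs_commr_center.
Qed.

End Center.

Theorem lemma5 (C : numClosedFieldType) (n : nat) (G : seq 'M[C]_n)
    (P : 'M[C]_n -> 'M[C]_n) :
  (forall h, h \in G -> is_hermitian h) ->
  orth_proj (center_set G) P ->
  forall X : 'M[C]_n,
    (exists Y, dla G Y /\ X = P Y) <->
    lin_span (fun Z => exists2 h, h \in G & Z = P h) X.
Proof.
move=> G_herm PZ X.
have ZD := @center_setD _ _ G; have ZZ := @center_setZ _ _ G.
have image := @lin_span_linear_image C n P (nested_comm G) X
  (orth_projD ZD ZZ PZ) (orth_projZ ZD ZZ PZ).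
apply: (iff_trans image); split; apply: lin_span_sub.
  move=> _ [Y [h hG | h W hG _] ->]; first by apply: lin_span_gen; exists h.
  by rewrite (center_proj_commr _ PZ (G_herm h hG) hG); apply: lin_span0.
by move=> _ [h hG ->]; apply: lin_span_gen; exists h => //; apply: nc_base.
Qed.
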